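(* Let $k,l\ge 1$ and let $V'(k,l)=\{x_1,\dots,x_k\}\times\{y_1,\dots,y_l\}$ with $x_1<\dots<x_k$ and $y_1<\dots<y_l$ real numbers. Let $S$ be a finite set of closed line segments in the plane, none of which is horizontal or vertical, whose union contains $V'(k,l)$. Then $|S|\ge k+l-2$. Moreover, if $k=1$ or $l=1$, or if $S$ is noncrossing, then $|S|\ge k+l-1$.
   Context: Segments are nondegenerate (positive length); a segment is horizontal (vertical) if its endpoints have equal $y$- (resp. $x$-) coordinates. A set of segments is noncrossing if any two of its segments intersect at most in a point that is a common endpoint of both. *)

From HB Require Import structures.
From mathcomp Require Import all_boot all_order all_algebra.
Set Implicit Arguments. Unset Strict Implicit. Unset Printing Implicit Defensive.
Import Order.TTheory GRing.Theory Num.Theory.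
Local Open Scope ring_scope.

Definition point (R : realFieldType) : Type := (R * R)%type.

Definition segment (R : realFieldType) : Type := (point R * point R)%type.

Definition on_seg (R : realFieldType) (u : segment R) (p : point R) : Prop :=
  exists2 t : R, 0 <= t <= 1 &
    p = (u.1.1 + t * (u.2.1 - u.1.1), u.1.2 + t * (u.2.2 - u.1.2)).

Definition non_axis (R : realFieldType) (u : segment R) : bool :=
  (u.1.1 != u.2.1) && (u.1.2 != u.2.2).

Definition is_endpoint (R : realFieldType) (u : segment R) (p : point R) : bool :=
  (p == u.1) || (p == u.2).

Definition same_seg (R : realFieldType) (u v : segment R) : bool :=
  ((u.1 == v.1) && (u.2 == v.2)) || ((u.1 == v.2) && (u.2 == v.1)).

Definition cross_free (R : realFieldType) (u v : segment R) : Prop :=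
  forall p : point R, on_seg u p -> on_seg v p ->
    is_endpoint u p && is_endpoint v p.

(* A family of segments (listed without repetition) is noncrossing. *)
Definition noncrossing (R : realFieldType) (s : seq (segment R)) : Prop :=
  forall (s1 s2 s3 : seq (segment R)) (u v : segment R),
    s = s1 ++ u :: s2 ++ v :: s3 -> cross_free u v.

From HB Require Import structures.
From mathcomp Require Import all_boot all_order all_algebra.
From mathcomp Require Import ring lra zify.
Import Order.TTheory GRing.Theory Num.Theory.
Local Open Scope ring_scope.
Set Implicit Arguments. Unset Strict Implicit. Unset Printing Implicit Defensive.

(* Let k = K + 1 and l = L + 1 and let S be a family of segments, none
   horizontal or vertical, covering the grid {x_0 < ... < x_K} x {y_0 < ... < y_L}.
   - A non-axis segment meets the first column (resp. row) in at most one
     point, so |S| >= l and |S| >= k; this settles the cases k = 1, l = 1.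
   - A non-axis segment contains at most two of the 2(K + L) grid points on
     the boundary of the bounding box: of three grid points on a segment the
     middle one is interior.  Double counting gives |S| >= K + L = k + l - 2.
   - If S is noncrossing and |S| = K + L, the double count is tight: every
     segment contains exactly two boundary points and every boundary point
     lies on exactly one segment.  Walking up the first column, the segment
     through (x_0, y_0) ascends and the one through (x_0, y_L) descends, so
     for some j an ascending segment leaves (x_0, y_j) and a descending one
     leaves (x_0, y_(j+1)).  Their chords towards their second boundary points
     cross; noncrossing forces the crossing to be a common endpoint, i.e. a
     boundary point lying on two segments, a contradiction. *)

Lemma leqif_sum_seq (U : eqType) (f : U -> nat) (s : seq U) c :
  (forall u, u \in s -> f u <= c)%N ->
  (\sum_(u <- s) f u <= c * size s ?= iff all (fun u => f u == c) s)%N.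
Proof.
elim: s => [|u s IH] le_fc; first by rewrite big_nil muln0.
rewrite big_cons mulnS /=; apply: leqif_add.
  by apply/leqif_eq/le_fc; rewrite mem_head.
by apply: IH => v sv; apply: le_fc; rewrite inE sv orbT.
Qed.

Section DoubleCounting.
Variables (U : eqType) (T : finType) (A : {set T}) (P : U -> T -> bool) (S : seq U).

Lemma double_count :
  (\sum_(a in A) count (P^~ a) S = \sum_(u <- S) #|[set a in A | P u a]|)%N.
Proof.
elim: S => [|u S' IH]; first by rewrite big_nil big1.
rewrite big_cons big_split /= IH; congr (_ + _)%N.
rewrite -sum1dep_card big_mkcond [RHS]big_mkcond /=.
by apply: eq_bigr => a _; case: (a \in A); case: (P u a).
Qed.

Hypothesis covered : forall a, a \in A -> has (P^~ a) S.

Lemma card_le_incidences : (#|A| <= \sum_(a in A) count (P^~ a) S)%N.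
Proof. by rewrite -sum1_card; apply: leq_sum => a /covered; rewrite has_count. Qed.

Lemma cover_bound c :
  (forall u, u \in S -> #|[set a in A | P u a]| <= c)%N -> (#|A| <= c * size S)%N.
Proof.
move=> few; rewrite (leq_trans card_le_incidences) // double_count.
exact: (leqif_sum_seq few).
Qed.

Lemma tight_cover c :
  (forall u, u \in S -> #|[set a in A | P u a]| <= c)%N -> (c * size S <= #|A|)%N ->
  (forall u, u \in S -> #|[set a in A | P u a]| = c) /\
  (forall a, a \in A -> count (P^~ a) S = 1%N).
Proof.
move=> few tight; have incid := card_le_incidences; rewrite double_count in incid.
have [le_sum eq_sum] := leqif_sum_seq few.
have sum_eq : (\sum_(u <- S) #|[set a in A | P u a]| = c * size S)%N.
  by apply/eqP; rewrite eqn_leq le_sum (leq_trans tight).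
split=> [u uS|a aA].
  by move: eq_sum; rewrite sum_eq eqxx => /esym/allP/(_ u uS)/eqP.
have one_le : forall b, b \in A -> (1 <= count (P^~ b) S ?= iff (count (P^~ b) S == 1))%N.
  by move=> b /covered; rewrite has_count => pos; split; rewrite // eq_sym.
have [_] := leqif_sum one_le; rewrite sum1_card double_count sum_eq.
rewrite eqn_leq tight (leq_trans incid) ?le_sum //=.
by move=> /esym/forall_inP/(_ a aA)/eqP.
Qed.
End DoubleCounting.

Section Segments.
Variable R : realFieldType.
Implicit Types (u : segment R) (p q : point R) (s t : R).

Definition seg_pt u t : point R :=
  (u.1.1 + t * (u.2.1 - u.1.1), u.1.2 + t * (u.2.2 - u.1.2)).

(* The parameter of p, read off its x-coordinate (u is not vertical). *)
Definition seg_param u p : R := (p.1 - u.1.1) / (u.2.1 - u.1.1).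

Definition on_segb u p : bool :=
  (0 <= seg_param u p <= 1) && (p == seg_pt u (seg_param u p)).

(* The product of the coordinate increments of u: positive iff u ascends. *)
Definition slope_sign u : R := (u.2.1 - u.1.1) * (u.2.2 - u.1.2).

Definition lerp p q s : point R := (p.1 + s * (q.1 - p.1), p.2 + s * (q.2 - p.2)).

Lemma seg_param_pt u t : u.1.1 != u.2.1 -> seg_param u (seg_pt u t) = t.
Proof. by move=> ux; rewrite /seg_param /=; field; rewrite subr_eq0 eq_sym. Qed.

Lemma on_segbP u p : u.1.1 != u.2.1 -> reflect (on_seg u p) (on_segb u p).
Proof.
move=> ux; apply: (iffP andP) => [[t01 /eqP ->]|[t t01 ->]].
  by exists (seg_param u p).
by rewrite seg_param_pt.
Qed.

Lemma on_segb_pt u p : on_segb u p -> p = seg_pt u (seg_param u p).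
Proof. by case/andP=> _ /eqP. Qed.

Lemma on_segb_param u p : on_segb u p -> 0 <= seg_param u p <= 1.
Proof. by case/andP. Qed.

Lemma seg_pt_inj_x u s t : u.1.1 != u.2.1 -> (seg_pt u s).1 = (seg_pt u t).1 -> s = t.
Proof.
move=> ux /= /addrI /(mulIf _); apply; by rewrite subr_eq0 eq_sym.
Qed.

Lemma seg_pt_inj_y u s t : u.1.2 != u.2.2 -> (seg_pt u s).2 = (seg_pt u t).2 -> s = t.
Proof.
move=> uy /= /addrI /(mulIf _); apply; by rewrite subr_eq0 eq_sym.
Qed.

Lemma seg_pt_endpoint u t : u.1.1 != u.2.1 -> is_endpoint u (seg_pt u t) -> t = 0 \/ t = 1.
Proof.
move=> ux /orP[] /eqP /(congr1 fst) e; [left|right];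
  by apply: (seg_pt_inj_x ux); rewrite e /=; ring.
Qed.

Lemma on_segb_same_x u p q :
  non_axis u -> on_segb u p -> on_segb u q -> p.1 = q.1 -> p = q.
Proof.
case/andP=> ux _ /on_segb_pt ep /on_segb_pt eq_q e1.
by rewrite ep eq_q (@seg_pt_inj_x u (seg_param u p) (seg_param u q)) // -ep -eq_q.
Qed.

Lemma on_segb_same_y u p q :
  non_axis u -> on_segb u p -> on_segb u q -> p.2 = q.2 -> p = q.
Proof.
case/andP=> _ uy /on_segb_pt ep /on_segb_pt eq_q e2.
by rewrite ep eq_q (@seg_pt_inj_y u (seg_param u p) (seg_param u q)) // -ep -eq_q.
Qed.

Definition between (a b c : R) : bool := (a < b < c) || (c < b < a).

Lemma between_of_distinct (a b c : R) : a != b -> b != c -> c != a ->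
  [|| between b a c, between a b c | between a c b].
Proof.
rewrite /between !neq_lt => /orP[] ab /orP[] bc /orP[] ca;
  rewrite ?ab ?bc ?ca ?orbT //=; exfalso; lra.
Qed.

Lemma between_affine (a d t1 t2 t3 : R) : d != 0 -> between t1 t2 t3 ->
  between (a + t1 * d) (a + t2 * d) (a + t3 * d).
Proof.
rewrite /between neq_lt !ltrD2l => /orP[] d0 /orP[] /andP[t12 t23];
  apply/orP; [right|left|left|right]; apply/andP; split; nra.
Qed.

Lemma between_interior (lo hi a b c : R) : between a b c ->
  lo <= a <= hi -> lo <= c <= hi -> lo < b < hi.
Proof. by case/orP=> /andP[? ?] /andP[? ?] /andP[? ?]; apply/andP; split; lra. Qed.

Lemma convex_param_extreme (ta tb s : R) : 0 <= ta <= 1 -> 0 <= tb <= 1 ->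
  ta != tb -> 0 <= s <= 1 ->
  (ta + s * (tb - ta) = 0) \/ (ta + s * (tb - ta) = 1) -> s = 0 \/ s = 1.
Proof.
move=> /andP[a0 a1] /andP[b0 b1] ab /andP[s0 s1] ext.
have [->|s_ne0] := eqVneq s 0; first by left.
have [->|s_ne1] := eqVneq s 1; first by right.
have s_gt0 : 0 < s by rewrite lt_def s_ne0.
have s_lt1 : s < 1 by rewrite lt_def eq_sym s_ne1.
by move: ab; rewrite neq_lt => /orP[] ab; case: ext => ext; exfalso; nra.
Qed.

Lemma lerp_on_seg u p q s : non_axis u -> on_segb u p -> on_segb u q -> p != q ->
  0 <= s <= 1 ->
  on_seg u (lerp p q s) /\ (is_endpoint u (lerp p q s) -> lerp p q s = p \/ lerp p q s = q).
Proof.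
case/andP=> ux _ onp onq pq s01.
have p01 := on_segb_param onp; have q01 := on_segb_param onq.
move: (on_segb_pt onp) (on_segb_pt onq) pq.
move: (seg_param u p) (seg_param u q) p01 q01 => tp tq p01 q01 -> -> pq.
have tpq : tp != tq by apply: contraNneq pq => ->.
have -> : lerp (seg_pt u tp) (seg_pt u tq) s = seg_pt u (tp + s * (tq - tp)).
  by rewrite /lerp /seg_pt /=; congr (_, _); ring.
split.
  exists (tp + s * (tq - tp)) => //.
  by case/andP: p01 => ? ?; case/andP: q01 => ? ?; case/andP: s01 => ? ?;
    apply/andP; split; nra.
move=> /(seg_pt_endpoint ux) /(convex_param_extreme p01 q01 tpq s01) [->|->].
- by left; congr seg_pt; ring.
- by right; congr seg_pt; ring.
Qed.

Lemma on_segb_increments u p q : on_segb u p -> on_segb u q ->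
  exists2 c, 0 <= c & (q.1 - p.1) * (q.2 - p.2) = c * slope_sign u.
Proof.
move=> /on_segb_pt -> /on_segb_pt ->.
exists ((seg_param u q - seg_param u p) ^+ 2); first exact: sqr_ge0.
by rewrite /seg_pt /slope_sign /=; ring.
Qed.

(* Two segments leave the vertical line x = x0 rightwards, from heights ya < yb;
   the lower one ends at height YP >= yb, the upper one at height YQ <= yb and
   not to the left of the lower one. *)
Lemma rising_falling_meet_le (x0 XP XQ ya yb YP YQ : R) :
  x0 < XP -> XP <= XQ -> ya < yb -> yb <= YP -> YQ <= yb ->
  exists sA sB, [/\ 0 <= sA <= 1, 0 <= sB <= 1 &
    lerp (x0, ya) (XP, YP) sA = lerp (x0, yb) (XQ, YQ) sB].
Proof.
move=> x0P PQ yab ybP Qyb.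
(* the point of abscissa XP on the second segment has fraction r *)
set r := (XP - x0) / (XQ - x0).
have r0 : 0 <= r by rewrite divr_ge0 //; lra.
have r1 : r <= 1 by rewrite ler_pdivrMr ?mul1r; lra.
have r_def : r * (XQ - x0) = XP - x0 by rewrite /r; field; lra.
set c := YP - ya - r * (YQ - yb).
have c_ge : yb - ya <= c by rewrite /c; nra.
set sA := (yb - ya) / c.
have sA0 : 0 <= sA by rewrite divr_ge0 //; lra.
have sA1 : sA <= 1 by rewrite ler_pdivrMr ?mul1r; lra.
have sA_def : sA * c = yb - ya by rewrite /sA; field; lra.
exists sA, (sA * r); split; first by rewrite sA0 sA1.
  by rewrite (mulr_ge0 sA0 r0) (mulr_ile1 sA0 r0 sA1 r1).
rewrite /lerp /=; congr (_, _); first by rewrite -mulrA r_def.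
have : sA * (YP - ya) - sA * r * (YQ - yb) = sA * c by rewrite /c; ring.
rewrite sA_def; lra.
Qed.

Lemma rising_falling_meet (x0 XP XQ ya yb YP YQ : R) :
  x0 < XP -> x0 < XQ -> ya < yb -> yb <= YP -> YQ <= ya ->
  exists sA sB, [/\ 0 <= sA <= 1, 0 <= sB <= 1 &
    lerp (x0, ya) (XP, YP) sA = lerp (x0, yb) (XQ, YQ) sB].
Proof.
move=> x0P x0Q yab ybP Qya; have [PQ|QP] := lerP XP XQ.
  by apply: rising_falling_meet_le => //; lra.
(* otherwise reflect in the horizontal axis and swap the two segments *)
have [sB [sA [sB01 sA01 /pair_equal_spec[ex ey]]]] :=
  @rising_falling_meet_le x0 XQ XP (- yb) (- ya) (- YQ) (- YP) x0Q (ltW QP)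
    ltac:(lra) ltac:(lra) ltac:(lra).
by exists sA, sB; split => //; rewrite /lerp /= in ex ey *; congr (_, _); lra.
Qed.

Lemma slope_sign_neq0 u : non_axis u -> slope_sign u != 0.
Proof.
by case/andP=> ux uy; rewrite mulf_eq0 !subr_eq0 negb_or eq_sym ux eq_sym uy.
Qed.
End Segments.

Lemma noncrossing_pair (R : realFieldType) (S : seq (segment R)) u v :
  noncrossing S -> u \in S -> v \in S -> u != v -> cross_free u v.
Proof.
move=> + uS; case/splitPr: uS => s1 s2 ncS.
rewrite mem_cat inE => /or3P[vS | /eqP-> | vS] uv z zu zv.
- move: ncS; case/splitPr: vS => s3 s4 ncS.
  by have := ncS s3 s4 s2 v u; rewrite -catA => /(_ erefl z zv zu); rewrite andbC.
- by rewrite eqxx in uv.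
- by move: ncS; case/splitPr: vS => s3 s4 /(_ s1 s3 s4 u v erefl z zu zv).
Qed.

Lemma noncrossing_chords_meet (R : realFieldType) (S : seq (segment R)) u v p q p' q' s s' :
  noncrossing S -> u \in S -> v \in S -> u != v -> non_axis u -> non_axis v ->
  on_segb u p -> on_segb u q -> p != q -> on_segb v p' -> on_segb v q' -> p' != q' ->
  0 <= s <= 1 -> 0 <= s' <= 1 -> lerp p q s = lerp p' q' s' ->
  (lerp p q s = p \/ lerp p q s = q) /\ (lerp p q s = p' \/ lerp p q s = q').
Proof.
move=> ncS uS vS uv u_na v_na onp onq pq onp' onq' pq' s01 s'01 meet.
have [on_u end_u] := lerp_on_seg u_na onp onq pq s01.
have [on_v end_v] := lerp_on_seg v_na onp' onq' pq' s'01.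
rewrite -meet in on_v end_v.
by have /andP[/end_u ? /end_v ?] := noncrossing_pair ncS uS vS uv on_u on_v.
Qed.

Definition strictly_increasing (R : realFieldType) n (f : 'I_n -> R) : Prop :=
  forall i j : 'I_n, (i < j)%N -> f i < f j.

Section Increasing.
Variables (R : realFieldType) (n : nat) (f : 'I_n -> R).
Hypothesis f_incr : strictly_increasing f.

Lemma incr_le (i j : 'I_n) : (i <= j)%N -> f i <= f j.
Proof.
rewrite leq_eqVlt => /orP[/eqP/val_inj -> //|/f_incr/ltW //].
Qed.

Lemma incr_ltn (i j : 'I_n) : f i < f j -> (i < j)%N.
Proof. by move=> fij; rewrite ltnNge; apply: contraTN fij => /incr_le; rewrite -leNgt. Qed.

Lemma incr_inj : injective f.
Proof.
move=> i j fij; apply: val_inj; apply/eqP; rewrite eqn_leq.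
by apply/andP; split; rewrite leqNgt; apply/negP => /f_incr; rewrite fij ltxx.
Qed.
End Increasing.

Lemma discrete_ivt (P : pred nat) n : P 0%N -> ~~ P n ->
  exists j, [/\ (j < n)%N, P j & ~~ P j.+1].
Proof.
elim: n => [-> //|n IH] P0 Pn.
have [Pn'|nPn'] := boolP (P n); first by exists n.
by have [j [jn Pj nPj]] := IH P0 nPn'; exists j; rewrite ltnS ltnW.
Qed.

Lemma count_two (T : eqType) (Q : pred T) (s : seq T) a b :
  a \in s -> b \in s -> a != b -> Q a -> Q b -> (1 < count Q s)%N.
Proof.
move=> aS bS ab Qa Qb; rewrite (permP (perm_to_rem aS)) /= Qa add1n ltnS -has_count.
by apply/hasP; exists b => //; apply: rem_mem; rewrite // eq_sym.
Qed.

Section Grid.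
Variables (R : realFieldType) (K L : nat) (x : 'I_K.+1 -> R) (y : 'I_L.+1 -> R).
Hypotheses (x_incr : strictly_increasing x) (y_incr : strictly_increasing y).

Definition grid_pt (p : 'I_K.+1 * 'I_L.+1) : point R := (x p.1, y p.2).

Definition boundary : {set 'I_K.+1 * 'I_L.+1} :=
  [set p | [|| p.1 == ord0, p.1 == ord_max, p.2 == ord0 | p.2 == ord_max]].

Lemma grid_pt_inj : injective grid_pt.
Proof.
by case=> [i j] [i' j'] [/(incr_inj x_incr) -> /(incr_inj y_incr) ->].
Qed.

Lemma x_range (i : 'I_K.+1) : x ord0 <= x i <= x ord_max.
Proof. by rewrite !(incr_le x_incr) // -ltnS. Qed.

Lemma y_range (j : 'I_L.+1) : y ord0 <= y j <= y ord_max.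
Proof. by rewrite !(incr_le y_incr) // -ltnS. Qed.

Lemma column_meets_once u x0 (A : {set 'I_L.+1}) : non_axis u ->
  (#|[set j in A | on_segb u (x0, y j)]| <= 1)%N.
Proof.
move=> u_na; apply/card_le1_eqP => j j'; rewrite !inE => /andP[_ onj] /andP[_ onj'].
by apply: (incr_inj y_incr); case: (on_segb_same_x u_na onj' onj erefl).
Qed.

Lemma row_meets_once u y0 (A : {set 'I_K.+1}) : non_axis u ->
  (#|[set i in A | on_segb u (x i, y0)]| <= 1)%N.
Proof.
move=> u_na; apply/card_le1_eqP => i i'; rewrite !inE => /andP[_ oni] /andP[_ oni'].
by apply: (incr_inj x_incr); case: (on_segb_same_y u_na oni' oni erefl).
Qed.

Lemma middle_grid_pt_interior u a b c : non_axis u ->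
  on_segb u (grid_pt a) -> on_segb u (grid_pt b) -> on_segb u (grid_pt c) ->
  between (seg_param u (grid_pt a)) (seg_param u (grid_pt b)) (seg_param u (grid_pt c)) ->
  b \notin boundary.
Proof.
case/andP=> ux uy /on_segb_pt ea /on_segb_pt eb /on_segb_pt ec mid.
have dx : u.2.1 - u.1.1 != 0 by rewrite subr_eq0 eq_sym.
have dy : u.2.2 - u.1.2 != 0 by rewrite subr_eq0 eq_sym.
have /andP[bx0 bx1] : x ord0 < x b.1 < x ord_max.
  have := between_affine u.1.1 dx mid.
  rewrite -[u.1.1 + _](congr1 fst ea) -[u.1.1 + _](congr1 fst eb).
  rewrite -[u.1.1 + _](congr1 fst ec) => /between_interior; apply; exact: x_range.
have /andP[by0 by1] : y ord0 < y b.2 < y ord_max.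
  have := between_affine u.1.2 dy mid.
  rewrite -[u.1.2 + _](congr1 snd ea) -[u.1.2 + _](congr1 snd eb).
  rewrite -[u.1.2 + _](congr1 snd ec) => /between_interior; apply; exact: y_range.
by rewrite inE; apply/or4P; case=> /eqP e; move: bx0 bx1 by0 by1; rewrite e ltxx.
Qed.

Lemma boundary_on_seg_le2 u : non_axis u ->
  (#|[set p in boundary | on_segb u (grid_pt p)]| <= 2)%N.
Proof.
move=> u_na; rewrite leqNgt; apply/negP => /card_gt2P [a [b [c []]]].
move=> [/setIdP[ba oa] /setIdP[bb ob] /setIdP[bc oc]] [ab b_c ca].
have param_neq p q : on_segb u (grid_pt p) -> on_segb u (grid_pt q) -> p != q ->
    seg_param u (grid_pt p) != seg_param u (grid_pt q).
  move=> op oq; apply: contraNneq => e; apply/eqP/grid_pt_inj.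
  by rewrite (on_segb_pt op) (on_segb_pt oq) e.
case/or3P: (between_of_distinct (param_neq _ _ oa ob ab) (param_neq _ _ ob oc b_c)
  (param_neq _ _ oc oa ca)) => mid.
- by have := middle_grid_pt_interior u_na ob oa oc mid; rewrite ba.
- by have := middle_grid_pt_interior u_na oa ob oc mid; rewrite bb.
- by have := middle_grid_pt_interior u_na oa oc ob mid; rewrite bc.
Qed.

Lemma card_boundary : (0 < K)%N -> (0 < L)%N -> (2 * (K + L) <= #|boundary|)%N.
Proof.
move=> K_gt0 L_gt0.
have card_inner n : (0 < n)%N -> #|~: [set (ord0 : 'I_n.+1); ord_max]| = n.-1.
  move=> n_gt0; have := cardsC [set (ord0 : 'I_n.+1); ord_max].
  rewrite cards2 card_ord.
  have -> : (ord0 : 'I_n.+1) != ord_max by rewrite -(inj_eq val_inj) /= eq_sym -lt0n.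
  lia.
have inner_sub : ~: boundary \subset
    setX (~: [set (ord0 : 'I_K.+1); ord_max]) (~: [set (ord0 : 'I_L.+1); ord_max]).
  by apply/subsetP => -[i j]; rewrite !inE /= !negb_or => /and4P[-> -> -> ->].
have := subset_leq_card inner_sub; rewrite cardsX !card_inner //.
have := cardsC boundary; rewrite card_prod !card_ord; nia.
Qed.

Variable S : seq (segment R).
Hypothesis S_non_axis : forall u, u \in S -> non_axis u.
Hypothesis S_covers : forall p, has (fun u => on_segb u (grid_pt p)) S.

(* Each segment meets the first column at most once. *)
Lemma column_bound : (L.+1 <= size S)%N.
Proof.
have := @cover_bound _ _ [set: 'I_L.+1] (fun u j => on_segb u (x ord0, y j)) S.
rewrite cardsT card_ord => /(_ (fun j _ => S_covers (ord0, j)) 1%N); rewrite mul1n.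
by apply=> u uS; apply: column_meets_once (S_non_axis uS).
Qed.

(* Each segment meets the first row at most once. *)
Lemma row_bound : (K.+1 <= size S)%N.
Proof.
have := @cover_bound _ _ [set: 'I_K.+1] (fun u i => on_segb u (x i, y ord0)) S.
rewrite cardsT card_ord => /(_ (fun i _ => S_covers (i, ord0)) 1%N); rewrite mul1n.
by apply=> u uS; apply: row_meets_once (S_non_axis uS).
Qed.

(* Each segment covers at most two of the 2(K + L) boundary points. *)
Lemma boundary_bound : (0 < K)%N -> (0 < L)%N -> (K + L <= size S)%N.
Proof.
move=> K_gt0 L_gt0; rewrite -(leq_pmul2l (isT : 0 < 2)%N).
apply: leq_trans (card_boundary K_gt0 L_gt0) _.
apply: cover_bound (fun p _ => S_covers p) _ _ => u uS.
exact: boundary_on_seg_le2 (S_non_axis uS).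
Qed.

Section Tight.
Hypotheses (K_gt0 : (0 < K)%N) (L_gt0 : (0 < L)%N).
Hypothesis S_noncrossing : noncrossing S.
Hypothesis S_small : (size S <= K + L)%N.

Lemma tight_boundary :
  (forall u, u \in S -> #|[set p in boundary | on_segb u (grid_pt p)]| = 2%N) /\
  (forall p, p \in boundary -> count (fun u => on_segb u (grid_pt p)) S = 1%N).
Proof.
apply: (tight_cover (A := boundary) (P := fun u p => on_segb u (grid_pt p))
  (fun p _ => S_covers p) (fun u uS => boundary_on_seg_le2 (S_non_axis uS))).
by apply: leq_trans (card_boundary K_gt0 L_gt0); rewrite leq_mul2l S_small orbT.
Qed.

Lemma boundary_pt_covered_once u v p : u \in S -> v \in S -> u != v -> p \in boundary ->
  on_segb u (grid_pt p) -> on_segb v (grid_pt p) -> False.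
Proof.
move=> uS vS uv pB onu onv.
by have := count_two (Q := fun w => on_segb w (grid_pt p)) uS vS uv onu onv;
  rewrite (tight_boundary.2 p pB).
Qed.

Lemma boundary_partner u p : u \in S -> p \in boundary -> on_segb u (grid_pt p) ->
  exists2 q, q \in boundary & on_segb u (grid_pt q) && (q != p).
Proof.
move=> uS pB onp.
have : (1 < #|[set q in boundary | on_segb u (grid_pt q)]|)%N.
  by rewrite (tight_boundary.1 u uS).
case/card_gt1P => q1 [q2 [/setIdP[q1B on1] /setIdP[q2B on2] q12]].
have [q1p|q1p] := eqVneq q1 p; last by exists q1; rewrite // on1.
by exists q2; rewrite // on2 -q1p eq_sym.
Qed.

Lemma left_partner u j : u \in S -> on_segb u (grid_pt (ord0, j)) ->
  exists q, [/\ q \in boundary, on_segb u (grid_pt q), x ord0 < x q.1,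
    y q.2 != y j & 0 <= (y q.2 - y j) * slope_sign u].
Proof.
move=> uS onj; have u_na := S_non_axis uS.
have jB : (ord0, j) \in boundary by rewrite inE eqxx.
have [q qB /andP[onq qj]] := boundary_partner uS jB onj.
have gq : grid_pt q != grid_pt (ord0, j) by rewrite (inj_eq grid_pt_inj).
have xq : x q.1 != x ord0.
  by apply: contraNneq gq => e; apply/eqP/(on_segb_same_x u_na onq onj).
have yq : y q.2 != y j.
  by apply: contraNneq gq => e; apply/eqP/(on_segb_same_y u_na onq onj).
have x0q : x ord0 < x q.1 by rewrite lt_def xq; case/andP: (x_range q.1).
have [c c0 incr] := on_segb_increments onj onq; rewrite /= in incr.
have dx : 0 < x q.1 - x ord0 by rewrite subr_gt0.
exists q; split => //; rewrite -(pmulr_rge0 _ dx).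
by rewrite mulrA incr -mulrA mulr_ge0 // -expr2 sqr_ge0.
Qed.

Definition ascends_at (n : nat) : bool :=
  has (fun u => on_segb u (grid_pt (ord0, inord n)) && (0 < slope_sign u)) S.

Lemma ascends_at_bottom : ascends_at 0.
Proof.
have e0 : inord 0 = ord0 :> 'I_L.+1 by apply: val_inj; rewrite /= inordK.
have /hasP[u uS on0] := S_covers (ord0, ord0).
apply/hasP; exists u; rewrite // e0 on0 /=.
have [q [_ _ _ yq sgn]] := left_partner uS on0.
have yq0 : y ord0 < y q.2 by rewrite lt_def yq; case/andP: (y_range q.2).
by rewrite lt_def slope_sign_neq0 ?S_non_axis //=; nra.
Qed.

Lemma not_ascends_at_top : ~~ ascends_at L.
Proof.
have eL : inord L = ord_max :> 'I_L.+1 by apply: val_inj; rewrite /= inordK.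
apply/hasPn => u uS; rewrite eL; apply/negP => /andP[onL u_up].
have [q [_ _ _ yq sgn]] := left_partner uS onL.
have yqL : y q.2 < y ord_max by rewrite lt_def eq_sym yq; case/andP: (y_range q.2).
by move: sgn; rewrite pmulr_lge0 // subr_ge0 leNgt yqL.
Qed.

(* A segment ascending from (x_0, y_j) and one not ascending from (x_0, y_(j+1))
   cross; the crossing must be a boundary point covered twice. *)
Lemma no_rise_below_fall (ja jb : 'I_L.+1) A B : val jb = (val ja).+1 ->
  A \in S -> B \in S -> on_segb A (grid_pt (ord0, ja)) -> 0 < slope_sign A ->
  on_segb B (grid_pt (ord0, jb)) -> ~~ (0 < slope_sign B) -> False.
Proof.
move=> jab AS BS onA A_up onB B_not_up.
have B_down : slope_sign B < 0 by rewrite lt_neqAle slope_sign_neq0 ?S_non_axis // leNgt.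
have AB : A != B by apply: contraTneq A_up => ->.
have [pa [paB onpa xpa ypa_ne ypa_sgn]] := left_partner AS onA.
have [qb [qbB onqb xqb yqb_ne yqb_sgn]] := left_partner BS onB.
have yab : y ja < y jb by apply: y_incr; rewrite jab.
have ypa : y jb <= y pa.2.
  have : y ja < y pa.2 by rewrite lt_def ypa_ne /=; nra.
  by move/(incr_ltn y_incr) => ja_pa; apply: (incr_le y_incr); rewrite jab.
have yqb : y qb.2 <= y ja.
  have : y qb.2 < y jb by rewrite lt_def eq_sym yqb_ne /=; nra.
  by move/(incr_ltn y_incr); rewrite jab ltnS => /(incr_le y_incr).
have [sA [sB [sA01 sB01 meet]]] := rising_falling_meet xpa xqb yab ypa yqb.
have neqA : grid_pt (ord0, ja) != grid_pt pa.
  by apply: contraTneq xpa => -[<- _]; rewrite ltxx.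
have neqB : grid_pt (ord0, jb) != grid_pt qb.
  by apply: contraTneq xqb => -[<- _]; rewrite ltxx.
have [endA endB] := noncrossing_chords_meet S_noncrossing AS BS AB (S_non_axis AS)
  (S_non_axis BS) onA onpa neqA onB onqb neqB sA01 sB01 meet.
have onB_meet : on_segb B (lerp (grid_pt (ord0, ja)) (grid_pt pa) sA).
  by case: endB => ->.
have jaB : (ord0, ja) \in boundary by rewrite inE eqxx.
by case: endA => e; rewrite e in onB_meet;
  [apply: (boundary_pt_covered_once AS BS AB jaB) |
   apply: (boundary_pt_covered_once AS BS AB paB)].
Qed.

(* Walking up the first column yields such a pair of segments. *)
Lemma tight_absurd : False.
Proof.
have [j [jL up_j not_up_j1]] := discrete_ivt ascends_at_bottom not_ascends_at_top.
have /hasP[A AS /andP[onA A_up]] := up_j.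
have /hasP[B BS onB] := S_covers (ord0, inord j.+1).
apply: (no_rise_below_fall _ AS BS onA A_up onB).
- by rewrite /= !inordK // ltnS // ltnW.
- by apply: contra not_up_j1 => B_up; apply/hasP; exists B; rewrite // onB.
Qed.
End Tight.

Lemma noncrossing_bound :
  noncrossing S -> (0 < K)%N -> (0 < L)%N -> (K + L < size S)%N.
Proof.
by move=> ncS K_gt0 L_gt0; rewrite ltnNge; apply/negP; apply: tight_absurd.
Qed.
End Grid.

Theorem lemma7 (R : realFieldType) (k l : nat) (x : 'I_k -> R) (y : 'I_l -> R)
    (S : seq (segment R)) :
  (1 <= k)%N -> (1 <= l)%N ->
  (forall i j : 'I_k, (i < j)%N -> x i < x j) ->
  (forall i j : 'I_l, (i < j)%N -> y i < y j) ->
  pairwise (fun u v => ~~ same_seg u v) S ->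
  all (@non_axis R) S ->
  (forall (i : 'I_k) (j : 'I_l), exists2 u, u \in S & on_seg u (x i, y j)) ->
  (k + l - 2 <= size S)%N /\
  ((k = 1%N \/ l = 1%N \/ noncrossing S) -> (k + l - 1 <= size S)%N).
Proof.
move=> k_gt0 l_gt0 x_incr y_incr _ /allP S_non_axis cover.
case: k x k_gt0 x_incr cover => [//|K] x _ x_incr cover.
case: l y l_gt0 y_incr cover => [//|L] y _ y_incr cover.
have S_covers p : has (fun u => on_segb u (grid_pt x y p)) S.
  have [u uS on_u] := cover p.1 p.2; apply/hasP; exists u => //.
  by apply/on_segbP => //; case/andP: (S_non_axis u uS).
have col := column_bound y_incr S_non_axis S_covers.
have row := row_bound x_incr S_non_axis S_covers.
have [K0|K_gt0] := posnP K; first by split => [|_]; lia.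
have [L0|L_gt0] := posnP L; first by split => [|_]; lia.
have bnd := boundary_bound x_incr y_incr S_non_axis S_covers K_gt0 L_gt0.
split=> [|[|[|ncS]]]; try lia.
have := noncrossing_bound x_incr y_incr S_non_axis S_covers ncS K_gt0 L_gt0; lia.
Qed.
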